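(* Let $f\in\mathbb{Z}[x]$ and $n\in\mathbb{Z}_{\geq1}$, and suppose that $f^n(x)-x$ is a nonzero polynomial with no repeated roots. Then for every $j\in\mathbb{Z}_{\geq0}$ and all but finitely many primes $p$: the dynamical system $(\mathbb{F}_p,[f]_p)$ has precisely $j$ cycles of length $n$ if and only if $[\Phi_{f,n}]_p$ has precisely $jn$ roots in $\mathbb{F}_p$.
   Context: For $f\in\mathbb{Z}[x]$ and a prime $p$, $[f]_p\in\mathbb{F}_p[x]$ is the reduction of $f$ mod $p$ (similarly for polynomials with $p$-integral rational coefficients, which holds for all but finitely many $p$). $f^n$ denotes the $n$-fold composite. For a map $g:S\to S$, a point $s$ has period $n$ if $n$ is the least positive integer with $g^n(s)=s$, and an $n$-cycle is the orbit $\{g^i(s):i\ge0\}$ of a point of period $n$. The $n$th dynatomic polynomial is $\Phi_{f,n}(x)=\prod_{d\mid n}(f^d(x)-x)^{\mu(n/d)}$ ($\mu$ the Möbius function); it is a polynomial in $\mathbb{Q}[x]$. *)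

From HB Require Import structures.
From mathcomp Require Import all_boot all_order all_algebra all_field.
Set Implicit Arguments. Unset Strict Implicit. Unset Printing Implicit Defensive.
Import Order.TTheory GRing.Theory Num.Theory.
Local Open Scope ring_scope.

Definition moebius (n : nat) : int :=
  if all (fun q => logn q n == 1%N) (primes n) then (-1) ^+ size (primes n) else 0.

Definition iterp (R : nzRingType) (n : nat) (f : {poly R}) : {poly R} :=
  iter n (fun q => f \Po q) 'X.

(* n-th dynatomic polynomial prod_{d|n} (f^d - X)^{mu(n/d)}, computed as the
   (exact) quotient of the factors with exponent +1 by those with exponent -1. *)
Definition dynatomic (F : fieldType) (f : {poly F}) (n : nat) : {poly F} :=
  (\prod_(d <- divisors n | moebius (n %/ d) == 1) (iterp d f - 'X)) %/
  (\prod_(d <- divisors n | moebius (n %/ d) == -1) (iterp d f - 'X)).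

(* reduction mod p of a rational number (meaningful when p does not divide
   the denominator) and of polynomials *)
Definition ratmodp (p : nat) (q : rat) : 'F_p :=
  (numq q)%:~R / (denq q)%:~R.
Definition redq (p : nat) (P : {poly rat}) : {poly 'F_p} := map_poly (ratmodp p) P.
Definition redz (p : nat) (P : {poly int}) : {poly 'F_p} := map_poly intr P.

Definition has_period (T : finType) (g : T -> T) (n : nat) (s : T) : bool :=
  [&& (0 < n)%N, iter n g s == s &
      [forall m : 'I_n, (0 < m)%N ==> (iter m g s != s)]].

Definition ncycles (T : finType) (g : T -> T) (n : nat) : {set {set T}} :=
  [set [set y | fconnect g s y] | s in [set s | has_period g n s]].

(* If f^n(x) - x has no double roots over a field, then at a point of exact
   period m the polynomial f^d(x) - x, for d | n, vanishes (simply) iff m | d.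
   The multiplicity of the point as a root of Phi_{f,n} is therefore
   sum_{m | d | n} mu(n/d) = [m = n], so the roots of Phi_{f,n} are exactly the
   points of exact period n.  Over Q, squarefreeness of S = f^n(x) - x is
   witnessed by a Bezout relation U S + V S' = D with D a nonzero integer;
   it survives reduction modulo every prime p > |D|, and for p not dividing
   the denominator of Phi_{f,n} the argument runs in F_p.  Finally the points
   of exact period n fall into disjoint cycles of n points each. *)

From HB Require Import structures.
From mathcomp Require Import all_boot all_order all_algebra all_field.
From mathcomp Require Import ring.
Set Implicit Arguments. Unset Strict Implicit. Unset Printing Implicit Defensive.
Import Order.TTheory GRing.Theory Num.Theory.
Local Open Scope ring_scope.

(** * Möbius sums over divisors *)

Lemma moebius_mul_prime c q : (0 < c)%N -> prime q -> ~~ (q %| c)%N ->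
  moebius (c * q) = - moebius c.
Proof.
move=> c_gt0 q_pr q_c; have q_gt0 := prime_gt0 q_pr.
have qNc : q \notin primes c by rewrite mem_primes q_pr c_gt0.
have primesMq : perm_eq (primes (c * q)) (q :: primes c).
  apply: uniq_perm => [||r]; first exact: primes_uniq.
    by rewrite cons_uniq qNc primes_uniq.
  by rewrite primesM // (primes_prime q_pr) !inE orbC.
rewrite /moebius (perm_all _ primesMq) (perm_size primesMq) /= lognM //.
rewrite (logn_prime _ q_pr) eqxx (_ : logn q c = 0%N) /=; last first.
  by apply/eqP; rewrite -leqn0 leqNgt logn_gt0.
rewrite (eq_in_all (a2 := fun r => logn r c == 1%N)); last first.
  move=> r rc; rewrite lognM // (logn_prime _ q_pr).
  by rewrite (_ : (r == q) = false) ?addn0 //; apply: contraNF qNc => /eqP <-.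
by case: ifP => _; rewrite ?oppr0 // exprS mulN1r.
Qed.

Lemma moebius_div_prime c q : (0 < c)%N -> prime q -> (q %| c)%N -> moebius c != 0 ->
  ~~ (q %| c %/ q)%N /\ moebius (c %/ q) = - moebius c.
Proof.
move=> c_gt0 q_pr q_c; have q_gt0 := prime_gt0 q_pr.
have cq_gt0 : (0 < c %/ q)%N by rewrite divn_gt0 // dvdn_leq.
move=> mu_c; have /allP sqf_c : all (fun r => logn r c == 1%N) (primes c).
  by move: mu_c; rewrite /moebius; case: ifP; rewrite ?eqxx.
have qNcq : ~~ (q %| c %/ q)%N.
  have /sqf_c/eqP : q \in primes c by rewrite mem_primes q_pr c_gt0.
  rewrite -{1}(divnK q_c) lognM // (logn_prime _ q_pr) eqxx addn1 => -[/eqP].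
  by rewrite -leqn0 leqNgt logn_gt0 mem_primes q_pr cq_gt0.
split=> //; have := moebius_mul_prime cq_gt0 q_pr qNcq.
by rewrite divnK // => ->; rewrite opprK.
Qed.

Lemma count_moebius_divisors k : (0 < k)%N ->
  count (fun c => moebius c == 1) (divisors k) =
  (count (fun c => moebius c == (-1)%R) (divisors k) + (k == 1%N))%N.
Proof.
move=> k_gt0; have [k_le1 | k_gt1] := leqP k 1.
  by rewrite (_ : k = 1%N) //; apply/eqP; rewrite eqn_leq k_le1.
rewrite gtn_eqF // addn0 -!size_filter.
pose q := pdiv k; have q_pr : prime q by rewrite pdiv_prime.
have q_k : (q %| k)%N := pdiv_dvd k.
(* Multiplying or dividing by the least prime factor of k pairs up the
   squarefree divisors of k with opposite Möbius signs. *)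
pose toggle c := if (q %| c)%N then (c %/ q)%N else (c * q)%N.
have toggleP c : (c %| k)%N -> moebius c != 0 ->
    [/\ toggle c \in divisors k, moebius (toggle c) = - moebius c
      & toggle (toggle c) = c].
  move=> c_k mu_c; have c_gt0 : (0 < c)%N := dvdn_gt0 k_gt0 c_k.
  rewrite /toggle -dvdn_divisors //; case: ifP => q_c.
    have [qNcq ->] := moebius_div_prime c_gt0 q_pr q_c mu_c.
    by rewrite (negPf qNcq) divnK // (dvdn_trans (dvdn_div q_c) c_k).
  rewrite dvdn_mull // mulnK ?prime_gt0 // moebius_mul_prime ?q_c //.
  by rewrite Gauss_dvd ?c_k // coprime_sym prime_coprime // q_c.
have mu_div v c : c \in filter (fun c => moebius c == v) (divisors k) ->
    v != 0 -> [/\ (c %| k)%N, moebius c = v & moebius c != 0].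
  by rewrite mem_filter -dvdn_divisors // => /andP[/eqP-> ->] ->.
suff : perm_eq (filter (fun c => moebius c == -1) (divisors k))
               (map toggle (filter (fun c => moebius c == 1) (divisors k))).
  by move/perm_size->; rewrite size_map.
apply: uniq_perm => [||c]; first by rewrite filter_uniq ?divisors_uniq.
  rewrite map_inj_in_uniq ?filter_uniq ?divisors_uniq // => a b /mu_div[] // a_k _ mu_a.
  move=> /mu_div[] // b_k _ mu_b eq_ab.
  by have [_ _ <-] := toggleP a a_k mu_a; have [_ _ <-] := toggleP b b_k mu_b; rewrite eq_ab.
apply/idP/mapP => [/mu_div[] // c_k mu_c1 mu_c | [a /mu_div[] // a_k mu_a1 mu_a ->]].
  have [tc_k mu_tc tt_c] := toggleP c c_k mu_c.
  by exists (toggle c); rewrite // mem_filter tc_k mu_tc mu_c1 opprK eqxx.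
by have [ta_k mu_ta _] := toggleP a a_k mu_a; rewrite mem_filter ta_k mu_ta mu_a1 eqxx.
Qed.

Lemma divnK_divisor n d : (0 < n)%N -> (d %| n)%N -> (n %/ (n %/ d))%N = d.
Proof.
move=> n_gt0 d_n; have d_gt0 := dvdn_gt0 n_gt0 d_n.
by rewrite -{1}(divnK d_n) mulKn // divn_gt0 // dvdn_leq.
Qed.

Lemma perm_divisors_compl n : (0 < n)%N ->
  perm_eq (map (divn n) (divisors n)) (divisors n).
Proof.
move=> n_gt0; apply: uniq_perm => [||e]; last 1 first.
- apply/mapP/idP => [[d] | e_n]; first by rewrite -!dvdn_divisors // => /dvdn_div e_n ->.
  have e_n' : (e %| n)%N by rewrite dvdn_divisors.
  by exists (n %/ e)%N; rewrite ?divnK_divisor // -dvdn_divisors // dvdn_div.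
- rewrite map_inj_in_uniq ?divisors_uniq // => a b; rewrite -!dvdn_divisors // => a_n b_n eq_ab.
  by rewrite -(divnK_divisor n_gt0 a_n) -(divnK_divisor n_gt0 b_n) /= eq_ab.
- exact: divisors_uniq.
Qed.

Lemma perm_divisors_dvd n k : (0 < n)%N -> (k %| n)%N ->
  perm_eq (filter (dvdn^~ k) (divisors n)) (divisors k).
Proof.
move=> n_gt0 k_n; have k_gt0 := dvdn_gt0 n_gt0 k_n.
apply: uniq_perm => [||e]; rewrite ?filter_uniq ?divisors_uniq //.
rewrite mem_filter -!dvdn_divisors //=.
by apply/andP/idP => [[] // | e_k]; rewrite e_k (dvdn_trans e_k).
Qed.

Lemma count_divisors_quotient n m (Q : pred nat) : (0 < n)%N -> (m %| n)%N ->
  count (fun d => Q (n %/ d)%N && (m %| d)%N) (divisors n) = count Q (divisors (n %/ m)).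
Proof.
move=> n_gt0 m_n; have m_gt0 := dvdn_gt0 n_gt0 m_n.
rewrite -(permP (perm_divisors_dvd n_gt0 (dvdn_div m_n))) count_filter.
rewrite -(permP (perm_divisors_compl n_gt0)) count_map.
apply: eq_in_count => d; rewrite -dvdn_divisors // => d_n /=; congr (_ && _).
have nd_gt0 : (0 < n %/ d)%N by rewrite divn_gt0 ?(dvdn_gt0 n_gt0 d_n) // dvdn_leq.
by rewrite -[RHS](dvdn_pmul2r m_gt0) divnK // -{2}(divnK d_n) dvdn_pmul2l.
Qed.

Lemma count_moebius_multiples n m : (0 < n)%N -> (m %| n)%N ->
  count (fun d => (moebius (n %/ d) == 1) && (m %| d)%N) (divisors n) =
  (count (fun d => (moebius (n %/ d) == (-1)%R) && (m %| d)%N) (divisors n)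
   + (m == n))%N.
Proof.
move=> n_gt0 m_n; have m_gt0 := dvdn_gt0 n_gt0 m_n.
rewrite (count_divisors_quotient (fun c => moebius c == 1)) //.
rewrite (count_divisors_quotient (fun c => moebius c == -1)) //.
have nm_gt0 : (0 < n %/ m)%N by rewrite divn_gt0 // dvdn_leq.
rewrite count_moebius_divisors //; congr (_ + nat_of_bool _)%N.
apply/eqP/eqP => [nm1 | ->]; last by rewrite divnn n_gt0.
by rewrite -(divnK m_n) nm1 mul1n.
Qed.

(** * Exact periods of iterated maps *)

Definition periodb (T : eqType) (h : T -> T) n x :=
  (iter n h x == x) && [forall m : 'I_n, (0 < m)%N ==> (iter m h x != x)].

Lemma iter_mul_fixed (T : Type) (h : T -> T) d k x :
  iter d h x = x -> iter (k * d) h x = x.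
Proof. by move=> fix_d; elim: k => [//|k IHk]; rewrite mulSn iterD IHk fix_d. Qed.

Lemma iter_mod_fixed (T : Type) (h : T -> T) m d x :
  iter m h x = x -> iter d h x = iter (d %% m) h x.
Proof. by move=> fix_m; rewrite {1}(divn_eq d m) addnC iterD iter_mul_fixed. Qed.

Lemma iter_fixed_dvdn (T : eqType) (h : T -> T) n x : (0 < n)%N -> iter n h x = x ->
  exists2 m, (0 < m)%N & forall d, (iter d h x == x) = (m %| d)%N.
Proof.
move=> n_gt0 fix_n.
have exP : exists k, (0 < k)%N && (iter k h x == x) by exists n; rewrite n_gt0 fix_n eqxx.
case: (ex_minnP exP) => m /andP[m_gt0 /eqP fix_m] m_min; exists m => // d.
rewrite (iter_mod_fixed d fix_m) /dvdn; apply/eqP/eqP => [fix_r | ->//].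
apply/eqP; rewrite -leqn0 leqNgt; apply/negP => r_gt0.
by have := m_min (d %% m)%N; rewrite r_gt0 fix_r eqxx leqNgt ltn_mod m_gt0 => /(_ isT).
Qed.

Lemma periodb_minimal (T : eqType) (h : T -> T) n m x : (0 < n)%N -> (0 < m)%N ->
  (forall d, (iter d h x == x) = (m %| d)%N) -> periodb h n x = (m == n).
Proof.
move=> n_gt0 m_gt0 fixE; rewrite /periodb fixE.
apply/andP/eqP => [[m_n /forallP m_min] | <-].
  apply/eqP; rewrite eqn_leq dvdn_leq //= leqNgt; apply/negP => m_lt_n.
  by have := m_min (Ordinal m_lt_n); rewrite /= m_gt0 fixE dvdnn.
split; first exact: dvdnn.
apply/forallP => k; apply/implyP => k_gt0; rewrite fixE.
by apply/negP => /(dvdn_leq k_gt0); rewrite leqNgt ltn_ord.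
Qed.

(** * Iterates of a polynomial *)

Lemma iterp0 (R : nzRingType) (f : {poly R}) : iterp 0 f = 'X.
Proof. by []. Qed.

Lemma iterpS (R : nzRingType) d (f : {poly R}) : iterp d.+1 f = f \Po iterp d f.
Proof. by []. Qed.

Lemma iterpD (R : comNzRingType) a b (f : {poly R}) :
  iterp (a + b) f = iterp a f \Po iterp b f.
Proof.
elim: a => [|a IHa]; first by rewrite add0n iterp0 comp_polyX.
by rewrite addSn !iterpS IHa comp_polyA.
Qed.

Lemma map_iterp (R S : nzRingType) (phi : {rmorphism R -> S}) d (f : {poly R}) :
  map_poly phi (iterp d f) = iterp d (map_poly phi f).
Proof.
elim: d => [|d IHd]; first by rewrite !iterp0 map_polyX.
by rewrite !iterpS map_comp_poly IHd.
Qed.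

Lemma horner_iterp (R : comNzRingType) d (f : {poly R}) x :
  (iterp d f).[x] = iter d (horner f) x.
Proof.
elim: d => [|d IHd]; first by rewrite iterp0 hornerX.
by rewrite iterpS horner_comp IHd.
Qed.

Lemma dvdp_sub_comp (K : fieldType) (p q r : {poly K}) :
  q - r %| (p \Po q) - (p \Po r).
Proof.
elim/poly_ind: p => [|p c IHp]; first by rewrite !comp_poly0 subr0 dvdp0.
rewrite !comp_polyD !comp_polyC !comp_polyM !comp_polyX.
have -> : (p \Po q) * q + c%:P - ((p \Po r) * r + c%:P) =
          ((p \Po q) - (p \Po r)) * q + (p \Po r) * (q - r) by ring.
by apply: dvdp_add; [apply: dvdp_mulr | apply: dvdp_mulIr].
Qed.

Definition periodic_poly (R : nzRingType) (g : {poly R}) d := iterp d g - 'X.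

Definition dyn_num (R : nzRingType) (g : {poly R}) n :=
  \prod_(d <- divisors n | moebius (n %/ d) == 1) periodic_poly g d.

Definition dyn_den (R : nzRingType) (g : {poly R}) n :=
  \prod_(d <- divisors n | moebius (n %/ d) == -1) periodic_poly g d.

Lemma dvdp_periodic_poly (K : fieldType) (g : {poly K}) d n :
  (d %| n)%N -> periodic_poly g d %| periodic_poly g n.
Proof.
rewrite /periodic_poly; case/dvdnP=> k ->.
elim: k => [|k IHk]; first by rewrite mul0n subrr dvdp0.
rewrite mulSn iterpD -(subrK (iterp d g \Po 'X) (_ \Po _)) -addrA.
apply: dvdp_add; last by rewrite comp_polyXr.
exact: dvdp_trans IHk (dvdp_sub_comp _ _ _).
Qed.

Lemma root_periodic_poly (R : comNzRingType) (g : {poly R}) d x :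
  root (periodic_poly g d) x = (iter d (horner g) x == x).
Proof. by rewrite /root !hornerE horner_iterp subr_eq0. Qed.

Lemma map_periodic_poly (R S : nzRingType) (phi : {rmorphism R -> S}) (g : {poly R}) d :
  map_poly phi (periodic_poly g d) = periodic_poly (map_poly phi g) d.
Proof. by rewrite rmorphB /= map_iterp map_polyX. Qed.

Lemma map_dyn_num (R S : nzRingType) (phi : {rmorphism R -> S}) (g : {poly R}) n :
  map_poly phi (dyn_num g n) = dyn_num (map_poly phi g) n.
Proof. by rewrite rmorph_prod; apply: eq_bigr => d _; apply: map_periodic_poly. Qed.

Lemma map_dyn_den (R S : nzRingType) (phi : {rmorphism R -> S}) (g : {poly R}) n :
  map_poly phi (dyn_den g n) = dyn_den (map_poly phi g) n.
Proof. by rewrite rmorph_prod; apply: eq_bigr => d _; apply: map_periodic_poly. Qed.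

(** * Multiplicities of periodic points *)

Lemma mup_prod (K : fieldType) (I : Type) (s : seq I) (P : pred I) (F : I -> {poly K}) x :
  all (fun i => P i ==> (F i != 0)) s ->
  mup x (\prod_(i <- s | P i) F i) = (\sum_(i <- s | P i) mup x (F i))%N.
Proof.
elim: s => [|i s IHs]; first by rewrite !big_nil mupNroot ?root1.
rewrite /= !big_cons => /andP[Fi_neq0 Fs_neq0].
case: ifP Fi_neq0 => [Pi /= Fi_neq0 | _ _]; last exact: IHs.
by rewrite mupM ?IHs ?prodf_seq_neq0.
Qed.

Section PeriodicPoints.
Variables (K : fieldType) (g : {poly K}) (n : nat).
Hypothesis n_gt0 : (0 < n)%N.
Hypothesis no_double_root : forall x : K, ~~ (('X - x%:P) ^+ 2 %| periodic_poly g n).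

Lemma periodic_poly_neq0 d : (d %| n)%N -> periodic_poly g d != 0.
Proof.
move=> d_n; apply: contraTneq (dvdp_periodic_poly g d_n) => ->; rewrite dvd0p.
by apply: contraNneq (no_double_root 0) => ->; rewrite dvdp0.
Qed.

Lemma all_periodic_poly_neq0 (P : pred nat) :
  all (fun d => P d ==> (periodic_poly g d != 0)) (divisors n).
Proof.
by apply/allP => d; rewrite -dvdn_divisors // => d_n; rewrite periodic_poly_neq0 ?implybT.
Qed.

Lemma dyn_num_neq0 : dyn_num g n != 0.
Proof. by rewrite prodf_seq_neq0 all_periodic_poly_neq0. Qed.

Lemma dyn_den_neq0 : dyn_den g n != 0.
Proof. by rewrite prodf_seq_neq0 all_periodic_poly_neq0. Qed.

Lemma mup_periodic_poly d x : (d %| n)%N ->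
  mup x (periodic_poly g d) = (iter d (horner g) x == x).
Proof.
move=> d_n; have [fix_d | nfix_d] := boolP (iter d (horner g) x == x); last first.
  by rewrite mupNroot // root_periodic_poly.
apply/eqP; rewrite eqn_leq mup_leq ?periodic_poly_neq0 //.
rewrite -XsubC_dvd ?periodic_poly_neq0 // dvdp_XsubCl root_periodic_poly fix_d andbT.
by apply: contra (no_double_root x) => /dvdp_trans; apply; apply: dvdp_periodic_poly.
Qed.

Lemma mup_dyn_num x :
  mup x (dyn_num g n) = (mup x (dyn_den g n) + periodb (horner g) n x)%N.
Proof.
have count_fixed (v : int) :
    (\sum_(d <- divisors n | moebius (n %/ d) == v) mup x (periodic_poly g d))%N =
    count (fun d => (moebius (n %/ d) == v) && (iter d (horner g) x == x)) (divisors n).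
  rewrite -sum1_count big_mkcondr big_seq_cond [RHS]big_seq_cond.
  apply: eq_bigr => d /andP[]; rewrite -dvdn_divisors // => d_n _.
  by rewrite mup_periodic_poly //; case: eqP.
rewrite !mup_prod ?all_periodic_poly_neq0 // !count_fixed.
have [fix_n | nfix_n] := eqVneq (iter n (horner g) x) x; last first.
  have nfix d : d \in divisors n -> (iter d (horner g) x == x) = false.
    rewrite -dvdn_divisors // => /dvdnP[k n_eq]; apply: contraNF nfix_n.
    by rewrite n_eq => /eqP fix_d; rewrite iter_mul_fixed.
  rewrite /periodb (negPf nfix_n) addn0.
  by rewrite !(eq_in_count (a2 := pred0)) => [|d /nfix /= ->|d /nfix /= ->]; rewrite ?andbF.
have [m m_gt0 fixE] := iter_fixed_dvdn n_gt0 fix_n.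
have m_n : (m %| n)%N by rewrite -fixE fix_n.
rewrite !(eq_count (fun d => congr1 _ (fixE d))) count_moebius_multiples //.
by rewrite (periodb_minimal n_gt0 m_gt0 fixE).
Qed.

End PeriodicPoints.

(** * Double roots and the dynatomic quotient *)

Lemma dvdp_XsubC_sqr (K : fieldType) (S : {poly K}) z :
  (('X - z%:P) ^+ 2 %| S) = root S z && root S^`() z.
Proof.
apply/idP/andP => [/divpK <- | [root_z]].
  rewrite derivM expr2 derivM derivXsubC mulr1 mul1r /root.
  by rewrite !(hornerXsubC, hornerD, hornerM) subrr !(mulr0, mul0r, addr0) eqxx.
move: root_z; rewrite -dvdp_XsubCl => /divpK <-.
rewrite derivM derivXsubC mulr1 /root hornerD hornerM hornerXsubC subrr mulr0 add0r.
rewrite -/(root _ z) -dvdp_XsubCl => /divpK <-.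
by rewrite expr2 -mulrA dvdp_mull.
Qed.

Lemma dvdp_prod_XsubC (K : fieldType) (rs : seq K) (P : {poly K}) : P != 0 ->
  (forall x, (count_mem x rs <= mup x P)%N) -> \prod_(z <- rs) ('X - z%:P) %| P.
Proof.
elim: rs P => [|r rs IHrs] P P_neq0 mupP; first by rewrite big_nil dvd1p.
have : (0 < mup r P)%N by apply: leq_trans (mupP r); rewrite /= eqxx.
rewrite -XsubC_dvd // => /divpK P_eq; set P' := P %/ _ in P_eq.
have P'_neq0 : P' != 0 by apply: contraNneq P_neq0; rewrite -P_eq => ->; rewrite mul0r.
rewrite big_cons -P_eq mulrC dvdp_mul // IHrs // => x.
have := mupP x; rewrite -P_eq mupM ?polyXsubC_eq0 // (@mup_XsubCX _ 1) /=.
by rewrite addnC leq_add2r.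
Qed.

Lemma dvdp_mup (K : closedFieldType) (P Q : {poly K}) : P != 0 -> Q != 0 ->
  (forall x, (mup x Q <= mup x P)%N) -> Q %| P.
Proof.
move=> P_neq0 Q_neq0 mupQP; have [rs Q_eq] := closed_field_poly_normal Q.
rewrite Q_eq dvdpZl ?lead_coef_eq0 //; apply: dvdp_prod_XsubC => // x.
rewrite -mu_prod_XsubC; apply: leq_trans (mupQP x).
by rewrite [X in (_ <= mup x X)%N]Q_eq -mul_polyC mupMr // rootC lead_coef_eq0.
Qed.

Lemma dynatomicE (K : fieldType) (L : closedFieldType) (phi : {rmorphism K -> L})
    (g : {poly K}) n : (0 < n)%N ->
  (forall z, ~~ (('X - z%:P) ^+ 2 %| periodic_poly (map_poly phi g) n)) ->
  dynatomic g n * dyn_den g n = dyn_num g n.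
Proof.
move=> n_gt0 no_double_root; apply: divpK.
rewrite -(dvdp_map phi) map_dyn_num map_dyn_den.
apply: dvdp_mup; [exact: dyn_num_neq0 | exact: dyn_den_neq0 | move=> x].
by rewrite mup_dyn_num // leq_addr.
Qed.

Lemma root_dyn_quotient (K : fieldType) (g Phi : {poly K}) (c : K) n : (0 < n)%N ->
  (forall z, ~~ (('X - z%:P) ^+ 2 %| periodic_poly g n)) -> c != 0 ->
  Phi * dyn_den g n = c%:P * dyn_num g n ->
  forall x, root Phi x = periodb (horner g) n x.
Proof.
move=> n_gt0 no_double_root c_neq0 Phi_eq x.
have Phi_neq0 : Phi != 0.
  apply: contra_neq (dyn_num_neq0 n_gt0 no_double_root) => Phi0.
  by apply/eqP; move: Phi_eq; rewrite Phi0 mul0r => /esym/eqP; rewrite mulf_eq0 polyC_eq0 (negPf c_neq0).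
have /eqP := congr1 (mup x) Phi_eq.
rewrite mupM ?dyn_den_neq0 // mupMr ?rootC // mup_dyn_num // addnC eqn_add2l => /eqP mupPhi.
by rewrite -dvdp_XsubCl XsubC_dvd // mupPhi; case: periodb.
Qed.

Lemma coprimep_deriv (L : closedFieldType) (S : {poly L}) :
  (forall z, ~~ (('X - z%:P) ^+ 2 %| S)) -> coprimep S S^`().
Proof.
move=> no_double_root; rewrite /coprimep; apply/negPn/negP => /closed_rootP[z].
by rewrite root_gcd -dvdp_XsubC_sqr; apply/negP.
Qed.

(** * Reduction modulo p *)

Lemma coprimep_int_Bezout (P Q : {poly int}) :
  coprimep (map_poly intr P : {poly rat}) (map_poly intr Q) ->
  exists U V : {poly int}, exists2 D : int, D != 0 & U * P + V * Q = D%:P.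
Proof.
move=> /Bezout_eq1_coprimepP[[u v] /= uv_eq].
have [U [a a_neq0 u_eq]] := rat_poly_scale u.
have [V [b b_neq0 v_eq]] := rat_poly_scale v.
exists (b%:P * U), (a%:P * V), (a * b); first by rewrite mulf_neq0.
apply: (@map_inj_poly _ _ (intr : int -> rat)); [exact: intr_inj | by [] |].
have intr_scale (c : int) (W : {poly int}) (w : {poly rat}) :
    c != 0 -> w = c%:~R^-1 *: map_poly intr W -> map_poly intr W = (c%:~R)%:P * w.
  by move=> c_neq0 ->; rewrite mul_polyC scalerA mulfV ?scale1r // intr_eq0.
rewrite rmorphD !rmorphM /= !map_polyC /= (intr_scale a U u) // (intr_scale b V v) //.
by rewrite -[RHS]mulr1 -uv_eq; ring.
Qed.

Lemma Bezout_deriv_no_double_root (R : nzRingType) (K : fieldType)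
    (phi : {rmorphism R -> K}) (S U V : {poly R}) (D : R) :
  U * S + V * S^`() = D%:P -> phi D != 0 ->
  forall z, ~~ (('X - z%:P) ^+ 2 %| map_poly phi S).
Proof.
move=> Bezout_eq phiD_neq0 z; rewrite dvdp_XsubC_sqr deriv_map.
apply: contra phiD_neq0 => /andP[/eqP S_z /eqP S'_z].
have := congr1 (fun W => (map_poly phi W).[z]) Bezout_eq.
by rewrite /= rmorphD !rmorphM /= map_polyC hornerD !hornerM hornerC S_z S'_z !mulr0 addr0 => <-.
Qed.

Lemma Fp_intr_neq0 p (z : int) : prime p -> z != 0 -> (`|z| < p)%N -> (z%:~R : 'F_p) != 0.
Proof.
move=> p_pr z_neq0 z_lt_p; rewrite -(dvdz_pcharf (pchar_Fp p_pr)).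
by apply: contraTN z_lt_p => /dvdn_leq; rewrite absz_gt0 z_neq0 -leqNgt => /(_ isT).
Qed.

Lemma ratmodp_frac p (b c : int) : prime p -> (c%:~R : 'F_p) != 0 ->
  ratmodp p (b%:~R / c%:~R) = b%:~R / c%:~R.
Proof.
move=> p_pr c_neq0; set q : rat := b%:~R / c%:~R.
have pchar_p := dvdz_pcharf (pchar_Fp p_pr).
have c_neq0' : c != 0 by apply: contraNneq c_neq0 => ->.
have numq_eq : numq q * c = b * denq q.
  apply: (@intr_inj rat); rewrite !rmorphM /= numqE /q.
  by rewrite mulrAC divfK ?intr_eq0.
have numq_eqp : ((numq q)%:~R : 'F_p) * c%:~R = b%:~R * (denq q)%:~R.
  by rewrite -!rmorphM /= numq_eq.
have denq_neq0 : ((denq q)%:~R : 'F_p) != 0.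
  rewrite -pchar_p; apply/negP => p_denq.
  have : ((numq q)%:~R * c%:~R : 'F_p) == 0.
    by move: p_denq; rewrite pchar_p numq_eqp => /eqP->; rewrite mulr0.
  rewrite mulf_eq0 (negPf c_neq0) orbF -pchar_p => p_numq.
  have := coprime_num_den q; rewrite /coprime => /eqP gcd1.
  have := conj p_numq p_denq => /andP; rewrite -dvdn_gcd gcd1 dvdn1 => /eqP p1.
  by move: p_pr; rewrite [p]p1.
by rewrite /ratmodp; apply/eqP; rewrite eqr_div // numq_eqp.
Qed.

Lemma redq_scale p (a : int) (P : {poly int}) : prime p -> (a%:~R : 'F_p) != 0 ->
  redq p ((a%:~R)^-1 *: map_poly intr P) = ((a%:~R)^-1 : 'F_p) *: redz p P.
Proof.
move=> p_pr a_neq0; apply/polyP => i.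
rewrite /redq /redz coef_map_id0; last by rewrite /ratmodp mul0r.
by rewrite !coefZ !coef_map /= mulrC ratmodp_frac // mulrC.
Qed.

Lemma no_double_root_modp (f : {poly int}) n :
  (forall z : algC, ~~ (('X - z%:P) ^+ 2 %| periodic_poly (map_poly intr f) n)) ->
  exists N, forall p, prime p -> (N < p)%N ->
    forall x : 'F_p, ~~ (('X - x%:P) ^+ 2 %| periodic_poly (redz p f) n).
Proof.
move=> no_double_root.
have coprimeQ : coprimep (map_poly intr (periodic_poly f n) : {poly rat})
                         (map_poly intr (periodic_poly f n)^`()).
  rewrite -(coprimep_map (ratr : {rmorphism rat -> algC})) -!map_poly_comp.
  rewrite !(eq_map_poly (fun z => ratr_int _ z)) -deriv_map map_periodic_poly.
  exact: coprimep_deriv.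
have [U [V [D D_neq0 Bezout_eq]]] := coprimep_int_Bezout coprimeQ.
exists `|D|%N => p p_pr D_lt_p x; rewrite -(map_periodic_poly (intr : {rmorphism int -> 'F_p})).
exact: Bezout_deriv_no_double_root Bezout_eq (Fp_intr_neq0 p_pr D_neq0 D_lt_p) x.
Qed.

Lemma root_dynatomic_modp (f : {poly int}) n : (0 < n)%N ->
  (forall z : algC, ~~ (('X - z%:P) ^+ 2 %| periodic_poly (map_poly intr f) n)) ->
  exists N, forall p, prime p -> (N < p)%N -> forall x : 'F_p,
    root (redq p (dynatomic (map_poly intr f) n)) x = periodb (horner (redz p f)) n x.
Proof.
move=> n_gt0 no_double_root; set Phi := dynatomic _ n.
have dynQ : Phi * dyn_den (map_poly intr f) n = dyn_num (map_poly intr f) n.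
  apply: (@dynatomicE _ _ (ratr : {rmorphism rat -> algC})) => // z.
  by rewrite -map_poly_comp (eq_map_poly (fun z => ratr_int _ z)).
have [PhiZ [a a_neq0 Phi_eq]] := rat_poly_scale Phi.
have dynZ : PhiZ * dyn_den f n = a%:P * dyn_num f n.
  apply: (@map_inj_poly _ _ (intr : int -> rat)); [exact: intr_inj | by [] |].
  have PhiZ_eq : map_poly intr PhiZ = a%:~R *: Phi.
    by rewrite Phi_eq scalerA mulfV ?scale1r // intr_eq0.
  rewrite !rmorphM /= map_polyC /= (map_dyn_den intr) (map_dyn_num intr).
  by rewrite PhiZ_eq -scalerAl dynQ mul_polyC.
have [N no_double_root_p] := no_double_root_modp no_double_root.
(* p must also not divide the common denominator [a] of Phi_{f,n}. *)
exists (N + `|a|)%N => p p_pr N_lt_p x.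
have a_neq0p : (a%:~R : 'F_p) != 0.
  by rewrite Fp_intr_neq0 // (leq_ltn_trans (leq_addl _ _) N_lt_p).
rewrite Phi_eq redq_scale // rootZ ?invr_eq0 //; apply: (root_dyn_quotient n_gt0 _ a_neq0p).
  exact: no_double_root_p (leq_ltn_trans (leq_addr _ _) N_lt_p).
have := congr1 (map_poly (intr : {rmorphism int -> 'F_p})) dynZ.
by rewrite !rmorphM /= map_polyC /= !(map_dyn_den, map_dyn_num).
Qed.

(** * Counting cycles *)

Section PeriodicOrbits.
Local Open Scope nat_scope.
Variables (T : finType) (h : T -> T) (n : nat).

Lemma has_periodP s :
  reflect [/\ 0 < n, iter n h s = s & forall m, 0 < m < n -> iter m h s != s]
          (has_period h n s).
Proof.
apply: (iffP and3P) => [[n_gt0 /eqP fix_n /forallP min_n] | [n_gt0 fix_n min_n]].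
  by split=> // m /andP[m_gt0 m_lt_n]; have := min_n (Ordinal m_lt_n); rewrite /= m_gt0.
split; rewrite ?fix_n //; apply/forallP => m; apply/implyP => m_gt0.
by rewrite min_n // m_gt0 ltn_ord.
Qed.

Lemma iter_mod_period s k : has_period h n s -> iter k h s = iter (k %% n) h s.
Proof. by case/has_periodP=> _ fix_n _; apply: iter_mod_fixed. Qed.

Lemma has_period_iter s k : has_period h n s -> has_period h n (iter k h s).
Proof.
move=> per_s; have [n_gt0 fix_n min_n] := has_periodP _ per_s.
apply/has_periodP; split=> // [|m m_range]; first by rewrite -iterD addnC iterD fix_n.
have back : iter (n - k %% n) h (iter k h s) = s.
  by rewrite (iter_mod_period k per_s) -iterD subnK ?fix_n // ltnW // ltn_mod.
apply: contra (min_n m m_range) => /eqP fix_m.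
by rewrite -{1}back -iterD addnC iterD fix_m back.
Qed.

Lemma fconnect_periodP s y : has_period h n s ->
  reflect (exists2 k, k < n & y = iter k h s) (fconnect h s y).
Proof.
move=> per_s; have [n_gt0 _ _] := has_periodP _ per_s.
apply: (iffP idP) => [/iter_findex <- | [k _ ->]]; last exact: fconnect_iter.
by exists (findex h s y %% n); rewrite ?ltn_mod // -iter_mod_period.
Qed.

Lemma fconnect_period_sym s y : has_period h n s -> fconnect h s y -> fconnect h y s.
Proof.
move=> per_s /(fconnect_periodP _ per_s)[k k_lt_n ->]; have [_ fix_n _] := has_periodP _ per_s.
by rewrite -{2}fix_n -(subnK (ltnW k_lt_n)) iterD fconnect_iter.
Qed.

Lemma card_period_orbit s : has_period h n s -> #|[set y | fconnect h s y]| = n.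
Proof.
move=> per_s; have -> : [set y | fconnect h s y] = [set iter (val k) h s | k : 'I_n].
  apply/setP => y; rewrite inE; apply/(fconnect_periodP _ per_s)/imsetP.
    by case=> k k_lt_n ->; exists (Ordinal k_lt_n).
  by case=> k _ ->; exists k.
rewrite card_imset ?card_ord //.
suff iter_inj i j : i <= j -> j < n -> iter i h s = iter j h s -> i = j.
  move=> i j /= eq_ij; apply/val_inj; case: (leqP i j) => [le_ij | /ltnW le_ji].
    exact: iter_inj le_ij (ltn_ord j) eq_ij.
  exact/esym/(iter_inj _ _ le_ji (ltn_ord i))/esym.
move=> le_ij j_lt_n eq_ij; apply/eqP; rewrite eqn_leq le_ij /= leqNgt.
apply/negP => lt_ij; have [_ _ min_n] := has_periodP _ (has_period_iter i per_s).
have := min_n (j - i); rewrite subn_gt0 lt_ij (leq_ltn_trans (leq_subr _ _)) //.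
by rewrite -iterD subnK 1?ltnW // eq_ij eqxx => /(_ isT).
Qed.

Lemma card_periodic : #|[set x | has_period h n x]| = #|ncycles h n| * n.
Proof.
set D := [set x | has_period h n x].
have cyclesE : ncycles h n = equivalence_partition (fconnect h) D.
  apply: eq_in_imset => s; rewrite inE => per_s; apply/setP => y; rewrite !inE.
  apply/idP/andP => [con_sy | [] //]; split=> //.
  by case/(fconnect_periodP _ per_s): con_sy => k _ ->; apply: has_period_iter.
have partD : partition (ncycles h n) D.
  rewrite cyclesE; apply: equivalence_partitionP => x y z x_D _ _.
  split; first exact: connect0.
  rewrite inE in x_D => con_xy; apply/idP/idP; last exact: connect_trans.
  exact: connect_trans (fconnect_period_sym x_D con_xy).
rewrite (card_partition partD) -sum_nat_const; apply: eq_bigr => A /imsetP[s].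
by rewrite inE => per_s ->; rewrite card_period_orbit.
Qed.

End PeriodicOrbits.

Theorem mainTheorem6 (f : {poly int}) (n : nat) :
  (0 < n)%N ->
  iterp n (map_poly intr f : {poly algC}) - 'X != 0 ->
  (forall z : algC,
      ~~ ((('X - z%:P) ^+ 2) %| (iterp n (map_poly intr f : {poly algC}) - 'X))) ->
  forall j : nat, exists N : nat, forall p : nat, prime p -> (N < p)%N ->
    (#|ncycles (fun x : 'F_p => (redz p f).[x]) n| = j <->
     #|[set x : 'F_p | root (redq p (dynatomic (map_poly intr f : {poly rat}) n)) x]|
       = (j * n)%N).
Proof.
(* [f^n(x) - x != 0] is implied by the absence of double roots. *)
move=> n_gt0 _ no_double_root j.
have [N rootE] := root_dynatomic_modp n_gt0 no_double_root.
exists N => p p_pr N_lt_p.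
have -> : [set x | root (redq p (dynatomic (map_poly intr f) n)) x] =
          [set x | has_period (horner (redz p f)) n x].
  by apply/setP => x; rewrite !inE rootE // /has_period n_gt0.
rewrite card_periodic; split=> [-> // | /eqP].
by rewrite eqn_pmul2r // => /eqP.
Qed.
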